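(* Let $m,d$ be natural numbers with $d\geqslant m+1$ and $c,C$ positive constants. For a natural number $N$, let $L=L(N):\mathbb{R}^d\to\mathbb{R}^m$ be a surjective linear map with matrix $(\lambda_{ij})_{i\leqslant m,j\leqslant d}$, and assume $\Vert L\Vert_\infty\leqslant C$ and $\operatorname{dist}(L,V_{\mathrm{rank}}(m,d))\geqslant c$. Then there exists an $m\times m$ submatrix $M$ of $L$ with (1) $|\det M|=\Omega_{c,C}(1)$ and (2) $\Vert M^{-1}\Vert_\infty=O_{c,C}(1)$ (such $M$ is called a rank matrix of $L$). Furthermore: (3) if $\mathbf v\in\mathbb{R}^d$ is such that $\mathbf v^T$ lies in the row space of $L$ and $\Vert\mathbf v\Vert_\infty\leqslant C_1$ for some constant $C_1>0$, then there exist coefficients $a_1,\dots,a_m$ with $|a_i|=O_{c,C,C_1}(1)$ such that $\sum_{i=1}^m a_i\lambda_{ij}=v_j$ for all $1\leqslant j\leqslant d$; and (4) if $L$ satisfies the stronger hypothesis $\operatorname{dist}(L,V^{\mathrm{gbl}}_{\mathrm{rank}}(m,d))\geqslant c$, then for each $j$ there is a rank matrix of $L$ not containing the $j$-th column of $L$.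
   Context: $\Vert\cdot\Vert_\infty$ is the maximum absolute value of matrix entries; $\operatorname{dist}$ is the $\ell^\infty$ distance on entries. $V_{\mathrm{rank}}(m,d)$ is the set of $m\times d$ real matrices of rank $<m$. $V^{\mathrm{gbl}}_{\mathrm{rank}}(m,d)$ is the set of linear maps $L:\mathbb{R}^d\to\mathbb{R}^m$ for which there is a standard basis vector $\mathbf e_i$ such that $L$ restricted to $\mathrm{span}(\mathbf e_j:j\neq i)$ has rank $<m$. $O_{c,C}(1)$ (resp. $\Omega_{c,C}(1)$) denotes a quantity bounded above (resp. below by a positive quantity) by a constant depending only on $c,C,m,d$; in (3) the constant may also depend on $C_1$. *)

From HB Require Import structures.
From mathcomp Require Import all_boot all_order all_algebra.
From mathcomp Require Import reals.
Set Implicit Arguments. Unset Strict Implicit. Unset Printing Implicit Defensive.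
Import Order.TTheory GRing.Theory Num.Theory.
Local Open Scope ring_scope.

Definition mxnorm_inf (R : realType) (p q : nat) (A : 'M[R]_(p, q)) : R :=
  \big[Num.max/0]_(i < p) \big[Num.max/0]_(j < q) `|A i j|.

Definition V_rank (R : realType) (m d : nat) (A : 'M[R]_(m, d)) : Prop :=
  (\rank A < m)%N.

(* The matrix of L restricted to span(e_k : k <> i) (column i replaced by 0);
   its rank is the rank of that restriction. *)
Definition drop_col (R : realType) (m d : nat) (i : 'I_d) (A : 'M[R]_(m, d))
  : 'M[R]_(m, d) := \matrix_(r < m, k < d) (if k == i then 0 else A r k).

Definition V_rank_gbl (R : realType) (m d : nat) (A : 'M[R]_(m, d)) : Prop :=
  exists i : 'I_d, (\rank (drop_col i A) < m)%N.

(* dist(L, V) >= c, with dist the l^oo distance on entries: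
   inf_{A in V} ||L - A||_oo >= c, i.e. every A in V is at distance >= c. *)
Definition dist_ge (R : realType) (m d : nat) (V : 'M[R]_(m, d) -> Prop)
  (L : 'M[R]_(m, d)) (c : R) : Prop :=
  forall A, V A -> c <= mxnorm_inf (L - A).

Definition rank_matrix (R : realType) (m d : nat) (L : 'M[R]_(m, d))
  (K1 K2 : R) (f : 'I_m -> 'I_d) : Prop :=
  injective f /\ K1 <= `|\det (colsub f L)| /\
  mxnorm_inf (invmx (colsub f L)) <= K2.

(* Let M be an m x m minor of L of maximal |det|.  By Cramer's rule every entry
   of M^-1 L is a ratio of two m x m minors of L, so it is at most 1 in absolute
   value.  For a row vector w, subtracting (w_i)^-1 (w L) from row i of L yields
   a matrix killed by w, hence of rank < m, at distance ||w L|| / |w_i| from L;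
   thus c |w_i| <= ||w L||.  With w a row of M^-1 this gives ||M^-1|| <= 1/c,
   and then |det M| = 1 / |det M^-1| >= c^m / m!.  With w the coefficients of v
   it gives (3) with K3 = C1 / c.  For (4), if L is c-far from V^gbl_rank then
   L with column j zeroed is c-far from V_rank, and its rank matrices cannot use
   the zero column. *)

From HB Require Import structures.
From mathcomp Require Import all_boot all_order all_algebra fingroup perm.
From mathcomp Require Import reals.
Import Order.TTheory GRing.Theory Num.Theory.
Local Open Scope ring_scope.

Section MxnormInf.
Context {R : realType}.

Lemma mxnorm_inf_ge0 {p q : nat} (A : 'M[R]_(p, q)) : 0 <= mxnorm_inf A.
Proof.
rewrite /mxnorm_inf; elim/big_ind: _ => // [x y|i _]; first by rewrite le_max => ->.
by elim/big_ind: _ => // x y; rewrite le_max => ->.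
Qed.

Lemma ler_entry_mxnorm_inf {p q : nat} (A : 'M[R]_(p, q)) i j : `|A i j| <= mxnorm_inf A.
Proof.
rewrite /mxnorm_inf; apply: le_trans (le_bigmax _ _ i).
exact: (le_bigmax _ (fun k => `|A i k|) j).
Qed.

Lemma mxnorm_inf_le {p q : nat} (A : 'M[R]_(p, q)) K :
  0 <= K -> (forall i j, `|A i j| <= K) -> mxnorm_inf A <= K.
Proof. by move=> K0 AK; do 2![apply: bigmax_le => // ? _]. Qed.

Lemma ler_mxnorm_inf {p q : nat} (A B : 'M[R]_(p, q)) :
  (forall i j, `|A i j| <= `|B i j|) -> mxnorm_inf A <= mxnorm_inf B.
Proof.
move=> AB; apply: mxnorm_inf_le => [|i j]; first exact: mxnorm_inf_ge0.
by apply: le_trans (AB i j) _; apply: ler_entry_mxnorm_inf.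
Qed.

Lemma mxnorm_infZ_le {p q : nat} a (A : 'M[R]_(p, q)) :
  mxnorm_inf (a *: A) <= `|a| * mxnorm_inf A.
Proof.
apply: mxnorm_inf_le => [|i j]; first by rewrite mulr_ge0 ?mxnorm_inf_ge0.
by rewrite mxE normrM ler_wpM2l ?ler_entry_mxnorm_inf.
Qed.

Lemma mxnorm_inf_delta_mul_le {p q : nat} (i : 'I_p) (u : 'rV[R]_q) :
  mxnorm_inf (delta_mx i 0 *m u) <= mxnorm_inf u.
Proof.
apply: mxnorm_inf_le => [|a k]; first exact: mxnorm_inf_ge0.
rewrite mxE big_ord1 mxE eqxx andbT normrM.
case: (a == i); rewrite ?normr1 ?mul1r ?normr0 ?mul0r ?mxnorm_inf_ge0 //.
exact: ler_entry_mxnorm_inf.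
Qed.

End MxnormInf.

Section DistanceToRankDeficient.
Context {R : realType} {m d : nat} {L : 'M[R]_(m, d)} {c : R}.
Hypothesis (c_gt0 : 0 < c) (distL : dist_ge (@V_rank R m d) L c).

Lemma dist_V_rank_full : \rank L = m.
Proof.
apply/eqP; rewrite eqn_leq rank_leq_row leqNgt; apply/negP => /distL.
rewrite subrr; apply/negP; rewrite -ltNge.
by apply: le_lt_trans c_gt0; apply: mxnorm_inf_le => // i j; rewrite mxE normr0.
Qed.

Lemma coef_mul_dist_V_rank_le (w : 'rV[R]_m) i :
  c * `|w 0 i| <= mxnorm_inf (w *m L).
Proof.
have [->|wi_neq0] := eqVneq (w 0 i) 0; first by rewrite normr0 mulr0 mxnorm_inf_ge0.
set u := w *m L; set x := w 0 i.
pose A := L - x^-1 *: (delta_mx i 0 *m u).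
have wA : w *m A = 0.
  rewrite mulmxBr -scalemxAr mulmxA -colE [col i w]mx11_scalar mul_scalar_mx.
  by rewrite mxE scalerA mulVf // scale1r subrr.
have rkA : V_rank A.
  rewrite /V_rank ltnNge; apply/negP => rkA.
  have freeA : row_free A by rewrite /row_free eqn_leq rank_leq_row rkA.
  move/eqP: wA; rewrite mulmx_free_eq0 // => /eqP w0.
  by move: wi_neq0; rewrite /x w0 mxE eqxx.
have LA_le : mxnorm_inf (L - A) <= `|x^-1| * mxnorm_inf u.
  rewrite subKr; apply: le_trans (mxnorm_infZ_le _ _) _.
  by rewrite ler_wpM2l ?mxnorm_inf_delta_mul_le.
have := le_trans (distL _ rkA) LA_le.
by rewrite normrV ?unitfE // ler_pdivlMl ?normr_gt0 // mulrC.
Qed.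

End DistanceToRankDeficient.

Section Determinant.
Context {R : realType}.

Lemma normr_det_le n (A : 'M[R]_n) K :
  0 <= K -> (forall i j, `|A i j| <= K) -> `|\det A| <= n`!%:R * K ^+ n.
Proof.
move=> K0 AK; apply: le_trans (ler_norm_sum _ _ _) _.
rewrite -card_Sn mulr_natl -sumr_const; apply: ler_sum => s _.
rewrite normrM normrX normrN1 expr1n mul1r normr_prod.
rewrite -[n in K ^+ n]card_ord -prodr_const.
by apply: ler_prod => i _; rewrite normr_ge0 AK.
Qed.

Lemma det_ge_of_mxnorm_invmx_le n (M : 'M[R]_n) c :
  0 < c -> M \in unitmx -> mxnorm_inf (invmx M) <= c^-1 ->
  c ^+ n / n`!%:R <= `|\det M|.
Proof.
move=> c_gt0 uM invM_le.
have detM_gt0 : 0 < `|\det M| by rewrite normr_gt0 -unitfE -unitmxE.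
have detV_le : `|\det (invmx M)| <= n`!%:R * c^-1 ^+ n.
  apply: normr_det_le => [|i j]; first by rewrite invr_ge0 ltW.
  exact: le_trans (ler_entry_mxnorm_inf _ i j) invM_le.
rewrite det_inv normrV ?unitfE ?normr_gt0 -?unitfE -?unitmxE // in detV_le.
move: detV_le; rewrite -lef_pV2 ?posrE ?invr_gt0 ?mulr_gt0 ?ltr0n ?fact_gt0 //.
  by rewrite invrK invfM exprVn invrK mulrC.
by rewrite exprn_gt0 ?invr_gt0.
Qed.

End Determinant.

Section MaximalMinor.
Context {R : realType}.

Lemma injective_colsub_unitmx n p (A : 'M[R]_(n, p)) (f : 'I_n -> 'I_p) :
  colsub f A \in unitmx -> injective f.
Proof.
rewrite unitmxE unitfE => detA_neq0 a b fab; apply: contraTeq detA_neq0 => ab_neq.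
by rewrite negbK -det_tr (determinant_alternate ab_neq) // => x; rewrite !mxE fab.
Qed.

Context {m d : nat} (L : 'M[R]_(m, d)).

Definition is_max_minor (f : 'I_m -> 'I_d) : Prop :=
  forall g : {ffun 'I_m -> 'I_d}, `|\det (colsub g L)| <= `|\det (colsub f L)|.

Lemma exists_colsub_unitmx :
  \rank L = m -> exists f : {ffun 'I_m -> 'I_d}, colsub f L \in unitmx.
Proof.
move=> rkL; have := maxrowsub_free L^T; move: (maxrankfun L^T).
rewrite mxrank_tr rkL => f free_f; exists f.
have -> : colsub f L = (rowsub f L^T)^T by apply/matrixP => a b; rewrite !mxE.
by rewrite unitmx_tr -row_free_unit.
Qed.

Lemma exists_max_minor : \rank L = m ->
  exists2 f : {ffun 'I_m -> 'I_d}, colsub f L \in unitmx & is_max_minor f.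
Proof.
move=> /exists_colsub_unitmx[g0 ug0].
pose F (g : {ffun 'I_m -> 'I_d}) := `|\det (colsub g L)|.
case: (@arg_maxP _ _ _ g0 predT F isT) => f _ fmax.
exists f => [|g]; last exact: fmax.
rewrite unitmxE unitfE -normr_gt0; apply: lt_le_trans (fmax g0 isT).
by rewrite /F normr_gt0 -unitfE -unitmxE.
Qed.

Lemma invmx_colsub_mulE (f : 'I_m -> 'I_d) j k : colsub f L \in unitmx ->
  (invmx (colsub f L) *m L) j k =
  \det (colsub [ffun x => if x == j then k else f x] L) / \det (colsub f L).
Proof.
move=> uM; rewrite /invmx uM -scalemxAl mxE mulrC; congr (_ * _).
rewrite (expand_det_col _ j) mxE; apply: eq_bigr => i _.
rewrite !mxE ffunE eqxx mulrC; congr (_ * (_ * \det _)).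
apply/matrixP => a b; rewrite !mxE ffunE.
by rewrite eq_sym (negbTE (neq_lift _ _)).
Qed.

Lemma max_minor_mulmx_le1 (f : 'I_m -> 'I_d) :
  colsub f L \in unitmx -> is_max_minor f -> forall j k, `|(invmx (colsub f L) *m L) j k| <= 1.
Proof.
move=> uM fmax j k; rewrite invmx_colsub_mulE // normrM normrV; last first.
  by rewrite -unitmxE.
by rewrite ler_pdivrMr ?mul1r ?normr_gt0 -?unitfE -?unitmxE.
Qed.

End MaximalMinor.

Lemma exists_rank_matrix {R : realType} {m d : nat} {L : 'M[R]_(m, d)} {c : R} :
  0 < c -> dist_ge (@V_rank R m d) L c ->
  exists f : 'I_m -> 'I_d, rank_matrix L (c ^+ m / m`!%:R) c^-1 f.
Proof.
move=> c_gt0 distL.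
have [f uM fmax] := exists_max_minor L (dist_V_rank_full c_gt0 distL).
have invM_le : mxnorm_inf (invmx (colsub f L)) <= c^-1.
  apply: mxnorm_inf_le => [|j i]; first by rewrite invr_ge0 ltW.
  have row_le1 : mxnorm_inf (row j (invmx (colsub f L) *m L)) <= 1.
    by apply: mxnorm_inf_le => // a k; rewrite mxE max_minor_mulmx_le1.
  rewrite -(ler_pM2l c_gt0) mulfV ?gt_eqF //; apply: le_trans row_le1.
  have := coef_mul_dist_V_rank_le distL (row j (invmx (colsub f L))) i.
  by rewrite -row_mul mxE.
exists f; split; first exact: injective_colsub_unitmx uM.
by split=> //; apply: det_ge_of_mxnorm_invmx_le.
Qed.

Section DropColumn.
Context {R : realType} {m d : nat}.
Implicit Types (A L : 'M[R]_(m, d)) (f : 'I_m -> 'I_d).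

Lemma drop_colE j A : drop_col j A = A *m (1%:M - delta_mx j j).
Proof.
apply/matrixP => r k; rewrite mulmxBr mulmx1 !mxE (bigD1 j) //= big1; last first.
  by move=> b /negbTE b_neq; rewrite mxE b_neq mulr0.
by rewrite mxE eqxx addr0 /=; case: (k =P j) => [->|_]; rewrite ?mulr1 ?subrr ?mulr0 ?subr0.
Qed.

Lemma mxrank_drop_col j A : (\rank (drop_col j A) <= \rank A)%N.
Proof. by rewrite drop_colE mxrankM_maxl. Qed.

Lemma dist_V_rank_drop_col j {L} {c : R} :
  dist_ge (@V_rank_gbl R m d) L c -> dist_ge (@V_rank R m d) (drop_col j L) c.
Proof.
move=> distL A rkA; pose B := \matrix_(r, k) (if k == j then L r k else A r k).
have rkB : V_rank_gbl B.
  exists j; have -> : drop_col j B = drop_col j A.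
    by apply/matrixP => r k; rewrite !mxE; case: (k == j).
  exact: leq_ltn_trans (mxrank_drop_col j A) rkA.
apply: le_trans (distL _ rkB) _; apply: ler_mxnorm_inf => r k; rewrite !mxE.
by case: (k == j); rewrite ?subrr ?normr0 ?normr_ge0.
Qed.

Lemma rank_matrix_drop_col {j L K1 K2 f} : 0 < K1 ->
  rank_matrix (drop_col j L) K1 K2 f -> rank_matrix L K1 K2 f /\ forall k, f k != j.
Proof.
move=> K1_gt0 rmD; have [_ [detM_ge _]] := rmD.
have f_neq k : f k != j.
  apply/negP => /eqP fkj; move: (lt_le_trans K1_gt0 detM_ge).
  rewrite (expand_det_col _ k) big1 ?normr0 ?ltxx // => i _.
  by rewrite !mxE fkj eqxx mul0r.
split=> //; move: rmD; rewrite /rank_matrix.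
suff -> : colsub f (drop_col j L) = colsub f L by [].
by apply/matrixP => a b; rewrite !mxE (negbTE (f_neq b)).
Qed.

End DropColumn.

Theorem proposition3p1 (R : realType) (m d : nat) (hmd : (m.+1 <= d)%N)
  (c C : R) (hc : 0 < c) (hC : 0 < C) :
  exists K1 K2 : R, 0 < K1 /\ 0 < K2 /\
  (forall L : 'M[R]_(m, d),
     \rank L = m -> mxnorm_inf L <= C -> dist_ge (@V_rank R m d) L c ->
     (exists f : 'I_m -> 'I_d, rank_matrix L K1 K2 f) /\
     (dist_ge (@V_rank_gbl R m d) L c ->
        forall j : 'I_d, exists f : 'I_m -> 'I_d,
          rank_matrix L K1 K2 f /\ (forall k, f k != j))) /\
  (forall C1 : R, 0 < C1 -> exists K3 : R, 0 < K3 /\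
     forall L : 'M[R]_(m, d),
       \rank L = m -> mxnorm_inf L <= C -> dist_ge (@V_rank R m d) L c ->
       forall v : 'rV[R]_d, (v <= L)%MS -> mxnorm_inf v <= C1 ->
       exists a : 'I_m -> R, (forall i, `|a i| <= K3) /\
         forall j : 'I_d, \sum_(i < m) a i * L i j = v 0 j).
Proof.
have K1_gt0 : 0 < c ^+ m / m`!%:R by rewrite divr_gt0 ?exprn_gt0 ?ltr0n ?fact_gt0.
exists (c ^+ m / m`!%:R), c^-1; do 2!split=> //; first by rewrite invr_gt0.
split=> [L _ _ distL|C1 C1_gt0].
  split=> [|distL_gbl j]; first exact: exists_rank_matrix.
  have [f rmD] := exists_rank_matrix hc (dist_V_rank_drop_col j distL_gbl).
  by exists f; apply: rank_matrix_drop_col K1_gt0 rmD.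
exists (C1 / c); split=> [|L _ _ distL _ /submxP[a ->] v_le]; first by rewrite divr_gt0.
exists (a 0); split=> [i|j]; last by rewrite mxE.
by rewrite ler_pdivlMr // mulrC; apply: le_trans (coef_mul_dist_V_rank_le distL a i) v_le.
Qed.
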